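(* Let a natural gas network be given by a connected directed graph with node set $\{1,\dots,N\}$ and edge set $\{1,\dots,E\}$ (no self-loops, no parallel edges), with node-edge incidence matrix $A\in\mathbb{R}^{N\times E}$, and let $B\in\mathbb{R}^{N\times E}$, $\gamma_{1}\in\mathbb{R}^{E}$, $\gamma_{2}\in\mathbb{R}^{E\times N}$, $\gamma_{3}\in\mathbb{R}^{E\times E}$, $\delta\in\mathbb{R}^{N}$ be given. Fix a reference node $\mathrm{r}$ and a reference value $\mathring{\pi}_{\mathrm{r}}\in\mathbb{R}$. Define $\hat{\gamma}_{2}=A\gamma_{2}\in\mathbb{R}^{N\times N}$, $\hat{\gamma}_{3}=B+A\gamma_{3}\in\mathbb{R}^{N\times E}$, and assume that the matrix $\hat{\gamma}_{2\backslash\mathrm{r}}$ obtained from $\hat{\gamma}_{2}$ by deleting its $\mathrm{r}$-th row and $\mathrm{r}$-th column is invertible. Let $\breve{\gamma}_{2}\in\mathbb{R}^{N\times N}$ be the matrix whose $\mathrm{r}$-th row and $\mathrm{r}$-th column are zero and whose remaining entries form $\hat{\gamma}_{2\backslash\mathrm{r}}^{-1}$ (i.e., $(\breve{\gamma}_{2})_{ij}=(\hat{\gamma}_{2\backslash\mathrm{r}}^{-1})_{ij}$ for $i,j\neq\mathrm{r}$, indices of the reduced matrix inherited from the original ones). Define $\grave{\gamma}_{2}=\gamma_{2}\breve{\gamma}_{2}\in\mathbb{R}^{E\times N}$ and $\grave{\gamma}_{3}=\gamma_{2}\breve{\gamma}_{2}\hat{\gamma}_{3}-\gamma_{3}\in\mathbb{R}^{E\times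 E}$. Let nominal quantities $\vartheta\in\mathbb{R}^{N}$, $\kappa\in\mathbb{R}^{E}$, $\varphi\in\mathbb{R}^{E}$, $\pi\in\mathbb{R}^{N}$ satisfy $A\varphi=\vartheta-B\kappa-\delta$, $\varphi=\gamma_{1}+\gamma_{2}\pi+\gamma_{3}\kappa$ and $\pi_{\mathrm{r}}=\mathring{\pi}_{\mathrm{r}}$, and let $\alpha\in\mathbb{R}^{N\times N}$, $\beta\in\mathbb{R}^{E\times N}$. Consider the affine control policies $\tilde{\vartheta}(\xi)=\vartheta+\alpha\xi$, $\tilde{\kappa}(\xi)=\kappa+\beta\xi$ and random extractions $\tilde{\delta}(\xi)=\delta+\xi$, $\xi\in\mathbb{R}^{N}$. Suppose functions $\tilde{\pi}:\mathbb{R}^{N}\to\mathbb{R}^{N}$ and $\tilde{\varphi}:\mathbb{R}^{N}\to\mathbb{R}^{E}$ satisfy, for every $\xi\in\mathbb{R}^{N}$, $$A\tilde{\varphi}(\xi)=\tilde{\vartheta}(\xi)-B\tilde{\kappa}(\xi)-\tilde{\delta}(\xi),\qquad \tilde{\varphi}(\xi)=\gamma_{1}+\gamma_{2}\tilde{\pi}(\xi)+\gamma_{3}\tilde{\kappa}(\xi),\qquad \tilde{\pi}_{\mathrm{r}}(\xi)=\mathring{\pi}_{\mathrm{r}}.$$ Then for every $\xi\in\mathbb{R}^{N}$, $$\tilde{\pi}(\xi)=\pi+\breve{\gamma}_{2}(\alpha-\hat{\gamma}_{3}\beta-I_{N})\xi,\qquad \tilde{\varphi}(\xi)=\varphi+\big(\grave{\gamma}_{2}(\alpha-I_{N})-\grave{\gamma}_{3}\beta\big)\xi,$$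 where $I_N$ is the $N\times N$ identity matrix.
   Context: The node-edge incidence matrix is defined by: for each edge $\ell=(n,n')$ directed from sending node $n$ to receiving node $n'$, $A_{n\ell}=+1$, $A_{n'\ell}=-1$, and $A_{k\ell}=0$ for all other nodes $k$. $\vartheta$ are gas injections, $\kappa$ pressure regulation rates of compressors/valves, $\varphi$ gas flow rates, $\pi$ squared nodal pressures, $\delta$ mean gas extractions and $\xi$ the forecast error of extractions. The equation $\varphi=\gamma_{1}+\gamma_{2}\pi+\gamma_{3}\kappa$ is a linearization of the Weymouth gas flow equation around a stationary point; $\gamma_1,\gamma_2,\gamma_3$ are treated as given constants. The matrix $B$ maps pressure regulation of active pipelines to fuel gas extraction at their sending nodes. *)

From HB Require Import structures.
From mathcomp Require Import all_boot all_order all_algebra.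
From mathcomp Require Import reals.
Set Implicit Arguments. Unset Strict Implicit. Unset Printing Implicit Defensive.
Import Order.TTheory GRing.Theory Num.Theory.
Local Open Scope ring_scope.

(* A directed graph with N nodes 'I_N and E edges 'I_E is given by the sending
   node src l and receiving node dst l of each edge l. *)

Definition incidence (R : pzRingType) (N E : nat) (src dst : 'I_E -> 'I_N)
  : 'M[R]_(N, E) :=
  \matrix_(k < N, l < E)
    (if k == src l then 1 else if k == dst l then -1 else 0).

Definition und_adj (N E : nat) (src dst : 'I_E -> 'I_N) : rel 'I_N :=
  fun u v => [exists l, ((src l == u) && (dst l == v)) || ((src l == v) && (dst l == u))].

Definition graph_connected (N E : nat) (src dst : 'I_E -> 'I_N) : Prop :=
  forall u v : 'I_N, connect (und_adj src dst) u v.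

Definition no_self_loops (N E : nat) (src dst : 'I_E -> 'I_N) : Prop :=
  forall l, src l != dst l.

Definition no_parallel_edges (N E : nat) (src dst : 'I_E -> 'I_N) : Prop :=
  injective (fun l => (src l, dst l)).

Definition del_rc (R : Type) (n : nat) (r : 'I_n.+1) (M : 'M[R]_n.+1) : 'M[R]_n :=
  row' r (col' r M).

Definition breve (R : comUnitRingType) (n : nat) (r : 'I_n.+1) (M : 'M[R]_n.+1)
  : 'M[R]_n.+1 :=
  \matrix_(i, j)
    match unlift r i, unlift r j with
    | Some i', Some j' => invmx (del_rc r M) i' j'
    | _, _ => 0
    end.

(* Subtracting the nominal equations from the perturbed ones leaves a linear
   system for the deviations: the flow deviation is [g2 *m dpi + g3 *m dkappa],
   and substituting it into the nodal balance gives
   [g2hat *m dpi = dtheta - g3hat *m dkappa - ddelta].  The pressure at the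
   reference node is fixed, so [dpi r 0 = 0]; for such vectors only the reduced
   matrix [del_rc r g2hat] matters, and solving the reduced system is exactly
   multiplication by [breve r g2hat]. *)

From mathcomp Require Import all_boot all_algebra reals ring.
Set Implicit Arguments. Unset Strict Implicit. Unset Printing Implicit Defensive.
Import GRing.Theory.
Local Open Scope ring_scope.

Lemma mulmx_col'_row' (R : pzSemiRingType) m n p (r : 'I_n.+1)
    (M : 'M[R]_(m, n.+1)) (Y : 'M[R]_(n.+1, p)) :
  M *m Y = col' r M *m row' r Y + col r M *m row r Y.
Proof.
apply/matrixP => i k; rewrite !mxE (bigD1_ord r) //= addrC big_ord1 !mxE.
by congr (_ + _); apply: eq_bigr => j _; rewrite !mxE.
Qed.

Lemma row'_mulmx (R : pzSemiRingType) m n p (i0 : 'I_m)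
    (M : 'M[R]_(m, n)) (Y : 'M[R]_(n, p)) :
  row' i0 (M *m Y) = row' i0 M *m Y.
Proof. by apply/matrixP => i k; rewrite !mxE; apply: eq_bigr => j _; rewrite mxE. Qed.

Lemma eq_row_row' (R : Type) m n (r : 'I_m) (U V : 'M[R]_(m, n)) :
  row r U = row r V -> row' r U = row' r V -> U = V.
Proof.
move=> eq_r eq_r'; apply/matrixP => i j.
have [->|neq_ir] := eqVneq i r.
  by have := congr1 (fun W : 'M_(1, n) => W 0 j) eq_r; rewrite !mxE.
by apply: (row'_eq eq_r'); rewrite inE.
Qed.

Section Breve.

Variables (R : comUnitRingType) (n : nat) (r : 'I_n.+1) (M : 'M[R]_n.+1).

Lemma row_breve : row r (breve r M) = 0.
Proof. by apply/rowP => j; rewrite !mxE unlift_none. Qed.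

Lemma col_breve : col r (breve r M) = 0.
Proof. by apply/colP => i; rewrite !mxE unlift_none; case: unlift. Qed.

Lemma del_rc_breve : del_rc r (breve r M) = invmx (del_rc r M).
Proof. by apply/matrixP => i j; rewrite !mxE !liftK. Qed.

Lemma breve_mul_solution p (D Y : 'M[R]_(n.+1, p)) :
  del_rc r M \in unitmx -> M *m D = Y -> row r D = 0 -> breve r M *m Y = D.
Proof.
move=> M_unit <- D_r0; apply: (eq_row_row' (r := r)).
  by rewrite row_mul row_breve mul0mx D_r0.
have reduce N : row' r (N *m D) = del_rc r N *m row' r D.
  by rewrite (mulmx_col'_row' r) D_r0 mulmx0 addr0 row'_mulmx.
rewrite (mulmx_col'_row' r) col_breve mul0mx addr0 row'_mulmx -/(del_rc r _).
by rewrite del_rc_breve reduce mulKmx.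
Qed.

End Breve.

Section SteadyStateDeviation.

Variables (R : comUnitRingType) (n E : nat) (A B : 'M[R]_(n.+1, E)).
Variables (g1 : 'cV[R]_E) (g2 : 'M[R]_(E, n.+1)) (g3 : 'M[R]_E) (r : 'I_n.+1).
Hypothesis g2hat_reduced_unit : del_rc r (A *m g2) \in unitmx.

Variables (theta theta' delta delta' pi pi' : 'cV[R]_n.+1).
Variables (kappa kappa' phi phi' : 'cV[R]_E).
Hypothesis balance : A *m phi = theta - B *m kappa - delta.
Hypothesis balance' : A *m phi' = theta' - B *m kappa' - delta'.
Hypothesis flow : phi = g1 + g2 *m pi + g3 *m kappa.
Hypothesis flow' : phi' = g1 + g2 *m pi' + g3 *m kappa'.
Hypothesis same_reference_pressure : pi' r 0 = pi r 0.

Lemma flow_deviation : phi' - phi = g2 *m (pi' - pi) + g3 *m (kappa' - kappa).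
Proof.
by rewrite flow flow' !mulmxBr; apply/matrixP => i j; rewrite !mxE; ring.
Qed.

Lemma pressure_deviation :
  pi' - pi = breve r (A *m g2)
               *m (theta' - theta - (B + A *m g3) *m (kappa' - kappa) - (delta' - delta)).
Proof.
symmetry; apply: breve_mul_solution => //; last first.
  by apply/rowP => k; rewrite (ord1 k) !mxE same_reference_pressure subrr.
have balance_deviation :
    A *m (phi' - phi) = theta' - theta - B *m (kappa' - kappa) - (delta' - delta).
  rewrite mulmxBr balance balance' mulmxBr.
  by apply/matrixP => i j; rewrite !mxE; ring.
rewrite -mulmxA mulmxDl -mulmxA; apply: (addIr (A *m (g3 *m (kappa' - kappa)))).
rewrite -mulmxDr -flow_deviation balance_deviation.
by apply/matrixP => i j; rewrite !mxE; ring.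
Qed.

End SteadyStateDeviation.

Theorem lemma1 (R : realType) (n E : nat) (src dst : 'I_E -> 'I_n.+1)
  (B : 'M[R]_(n.+1, E)) (g1 : 'cV[R]_E) (g2 : 'M[R]_(E, n.+1)) (g3 : 'M[R]_E)
  (delta : 'cV[R]_n.+1) (r : 'I_n.+1) (pir : R) :
  no_self_loops src dst ->
  no_parallel_edges src dst ->
  graph_connected src dst ->
  let A : 'M[R]_(n.+1, E) := incidence R src dst in
  let g2hat := A *m g2 in
  let g3hat := B + A *m g3 in
  del_rc r g2hat \in unitmx ->
  let g2breve := breve r g2hat in
  let g2grave := g2 *m g2breve in
  let g3grave := g2 *m g2breve *m g3hat - g3 in
  forall (theta : 'cV[R]_n.+1) (kappa phi : 'cV[R]_E) (pi : 'cV[R]_n.+1)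
         (alpha : 'M[R]_n.+1) (beta : 'M[R]_(E, n.+1)),
  A *m phi = theta - B *m kappa - delta ->
  phi = g1 + g2 *m pi + g3 *m kappa ->
  pi r 0 = pir ->
  forall (pit : 'cV[R]_n.+1 -> 'cV[R]_n.+1) (phit : 'cV[R]_n.+1 -> 'cV[R]_E),
  (forall xi : 'cV[R]_n.+1,
     let thetat := theta + alpha *m xi in
     let kappat := kappa + beta *m xi in
     let deltat := delta + xi in
     [/\ A *m phit xi = thetat - B *m kappat - deltat,
         phit xi = g1 + g2 *m pit xi + g3 *m kappat
       & pit xi r 0 = pir]) ->
  forall xi : 'cV[R]_n.+1,
    pit xi = pi + g2breve *m (alpha - g3hat *m beta - 1%:M) *m xi /\
    phit xi = phi + (g2grave *m (alpha - 1%:M) - g3grave *m beta) *m xi.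
Proof.
move=> _ _ _ A g2hat g3hat g2hat_unit g2breve g2grave g3grave theta kappa phi pi
  alpha beta balance flow ref_pi pit phit perturbed xi.
have [balance' flow' ref_pit] := perturbed xi.
have same_ref : pit xi r 0 = pi r 0 by rewrite ref_pit ref_pi.
have cancel_nominal (V : zmodType) (x y : V) : x + y - x = y by rewrite addrC addKr.
have dpi := pressure_deviation g2hat_unit balance balance' flow flow' same_ref.
have dphi := flow_deviation flow flow'.
rewrite !cancel_nominal in dpi dphi.
have dpi' : pit xi - pi = g2breve *m (alpha - g3hat *m beta - 1%:M) *m xi.
  by rewrite dpi -mulmxA !mulmxBl mul1mx -mulmxA.
split; first by rewrite -dpi' addrC subrK.
rewrite -[phit xi](subrK phi) addrC dphi dpi'; congr (_ + _).
rewrite /g2grave /g3grave !(mulmxBl, mulmxBr, mulmxA, mul1mx, mulmx1).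
by apply/matrixP => i j; rewrite !mxE; ring.
Qed.
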